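(* Let $L$ be a positive integer and $U$ a real number with $L > \frac{8}{U}$. Consider, for real $\Lambda$, the equation $$\sin q - \Lambda = \frac{U}{4}\cot\left(\frac{qL}{2}\right)$$ for $q\in[0,2\pi)$. This equation has exactly $L$ branches of solutions $q_\ell(\Lambda)$, $\ell=1,\dots,L$ (real-valued functions of $\Lambda\in\mathbb{R}$), with the properties (i) $(\ell-1)\frac{2\pi}{L} \le q_\ell(\Lambda) \le \ell\frac{2\pi}{L}$; (ii) $\frac{d q_\ell(\Lambda)}{d\Lambda} > 0$; (iii) $\lim_{\Lambda\to-\infty} q_\ell(\Lambda) = (\ell-1)\frac{2\pi}{L}$ and $\lim_{\Lambda\to\infty} q_\ell(\Lambda) = \ell\frac{2\pi}{L}$.
   Context: The inequality $L>8/U$ is called the Takahashi condition. A branch of solutions means a function $\Lambda\mapsto q(\Lambda)$ with $q(\Lambda)\in[0,2\pi)$ satisfying the equation for every real $\Lambda$. *)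

From Stdlib Require Import Reals Lra.
From Coquelicot Require Import Coquelicot.
Open Scope R_scope.

Definition cot (x : R) : R := cos x / sin x.

Definition is_solution (L : nat) (U Lam q : R) : Prop :=
  0 <= q < 2 * PI /\
  sin (q * INR L / 2) <> 0 /\
  sin q - Lam = U / 4 * cot (q * INR L / 2).

Definition is_branch (L : nat) (U : R) (q : R -> R) : Prop :=
  forall Lam : R, is_solution L U Lam (q Lam).

(* Write the equation as Lam = lam_of q := sin q - U/4 cot (q L / 2).  The poles
   of the cotangent cut [0, 2 PI) into the L open cells ((l-1) 2PI/L, l 2PI/L), and
   no solution lies on a cell endpoint.  On each cell
   lam_of' q = cos q + U L / (8 sin (q L / 2)^2) >= U L / 8 - 1 > 0 by the Takahashi
   condition, while lam_of tends to -oo at the left end and to +oo at the right end.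
   So lam_of maps each cell increasingly onto R; its inverse is the branch q_l, which
   has positive derivative by the inverse function theorem and tends to the cell
   endpoints as Lam -> -oo, +oo.  A continuous branch cannot cross a pole, so it
   stays in a single cell and coincides with the corresponding q_l. *)

From Stdlib Require Import Reals Lra Lia Ranalysis5 ClassicalEpsilon.
From Coquelicot Require Import Coquelicot.
Open Scope R_scope.

Lemma cot_add_nat_PI (k : nat) (t : R) : cot (t + INR k * PI) = cot t.
Proof.
induction k as [|k IH].
- simpl. rewrite Rmult_0_l, Rplus_0_r. reflexivity.
- rewrite S_INR. replace (t + (INR k + 1) * PI) with ((t + INR k * PI) + PI) by ring.
  unfold cot in *. rewrite neg_sin, neg_cos, <- IH. unfold Rdiv. rewrite Rinv_opp. ring.
Qed.

Lemma cot_PI_minus (t : R) : cot (PI - t) = - cot t.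
Proof. unfold cot. rewrite Rtrigo_facts.cos_pi_minus, sin_PI_x. unfold Rdiv. ring. Qed.

(* From sin t < t and cos t = 1 - 2 sin (t/2)^2 >= 1 - t^2/2 >= 1/2. *)
Lemma two_mul_cot_ge_1 (t : R) : 0 < t <= 1 -> 1 <= 2 * t * cot t.
Proof.
intros [t_pos t_le1]. pose proof PI2_1.
assert (sin_pos : 0 < sin t) by (apply sin_gt_0; lra).
assert (sin_lt : sin t < t) by (apply sin_lt_x; lra).
assert (half_ge0 : 0 <= sin (t/2)) by (apply sin_ge_0; lra).
assert (half_lt : sin (t/2) < t/2) by (apply sin_lt_x; lra).
assert (cos_half : cos t = 1 - 2 * sin (t/2) * sin (t/2)).
{ replace t with (2 * (t/2)) at 1 by field. apply cos_2a_sin. }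
assert (cos_ge : 1/2 <= cos t) by nra.
assert (E : 2 * t * cot t - 1 = (2 * t * cos t - sin t) / sin t) by (unfold cot; field; lra).
assert (0 <= (2 * t * cos t - sin t) / sin t) by (apply Rdiv_le_0_compat; nra).
lra.
Qed.

Lemma cot_unbounded (M : R) : exists t, 0 < t <= 1 /\ M <= cot t.
Proof.
set (t := Rmin 1 (/ (2 * (Rabs M + 1)))).
pose proof (Rle_abs M). pose proof (Rabs_pos M).
assert (t_pos : 0 < t) by (apply Rmin_glb_lt; [lra | apply Rinv_0_lt_compat; lra]).
assert (t_le1 : t <= 1) by apply Rmin_l.
assert (t_le : t <= / (2 * (Rabs M + 1))) by apply Rmin_r.
assert (tM : t * (2 * (Rabs M + 1)) <= 1).
{ apply (Rmult_le_compat_r (2 * (Rabs M + 1))) in t_le; [|lra].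
  rewrite Rinv_l in t_le by lra. exact t_le. }
exists t. split; [lra|].
pose proof (two_mul_cot_ge_1 t (conj t_pos t_le1)). nra.
Qed.

Lemma continuous_avoid_side (p : R -> R) (c x y : R) :
  continuity p -> (forall z, p z <> c) -> p x < c -> p y < c.
Proof.
intros p_cont p_avoid px_lt.
destruct (Rlt_le_dec (p y) c) as [|py_ge]; [assumption|].
destruct (IVT_gen p x y c p_cont) as [z [_ pz]].
{ unfold Rmin, Rmax; destruct (Rle_dec _ _); lra. }
now destruct (p_avoid z).
Qed.

Lemma is_lim_p_infty_of_le (g : R -> R) (b : R) :
  (forall x, g x <= b) ->
  (forall z, z < b -> exists M, forall x, M < x -> z <= g x) ->
  is_lim g p_infty b.
Proof.
intros g_le g_ev. apply is_lim_spec. intros eps.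
destruct (g_ev (b - eps / 2)) as [M HM]; [pose proof (cond_pos eps); lra|].
exists M. intros x Hx. specialize (HM x Hx). specialize (g_le x).
rewrite Rabs_left1; pose proof (cond_pos eps); lra.
Qed.

Lemma is_lim_m_infty_of_ge (g : R -> R) (a : R) :
  (forall x, a <= g x) ->
  (forall z, a < z -> exists M, forall x, x < M -> g x <= z) ->
  is_lim g m_infty a.
Proof.
intros g_ge g_ev. apply is_lim_spec. intros eps.
destruct (g_ev (a + eps / 2)) as [M HM]; [pose proof (cond_pos eps); lra|].
exists M. intros x Hx. specialize (HM x Hx). specialize (g_ge x).
rewrite Rabs_right; pose proof (cond_pos eps); lra.
Qed.


Section Cells.

Variables (L : nat) (U : R).
Hypothesis L_pos : 0 < INR L.

Definition lam_of (q : R) : R := sin q - U / 4 * cot (q * INR L / 2).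
Definition dlam_of (q : R) : R := cos q + U * INR L / 8 / sin (q * INR L / 2) ^ 2.

Definition cell_lo (l : nat) : R := (INR l - 1) * (2 * PI / INR L).
Definition cell_hi (l : nat) : R := INR l * (2 * PI / INR L).

Lemma cell_step_pos : 0 < 2 * PI / INR L.
Proof. apply Rdiv_lt_0_compat; [pose proof PI_RGT_0; lra | exact L_pos]. Qed.

Lemma cell_hi_le_lo (l l' : nat) : (l < l')%nat -> cell_hi l <= cell_lo l'.
Proof.
intros ll'. assert (le : INR (S l) <= INR l') by (apply le_INR; lia).
rewrite S_INR in le. pose proof cell_step_pos. unfold cell_lo, cell_hi. nra.
Qed.

Lemma cell_in_range (l : nat) : (1 <= l <= L)%nat -> 0 <= cell_lo l /\ cell_hi l <= 2 * PI.
Proof.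
intros [l_ge1 l_leL]. apply le_INR in l_ge1, l_leL. simpl in l_ge1.
pose proof cell_step_pos.
assert (E : 2 * PI = INR L * (2 * PI / INR L)) by (field; lra).
unfold cell_lo, cell_hi. split; nra.
Qed.

Lemma cell_cover (x : R) : 0 <= x < 2 * PI ->
  exists l, (1 <= l <= L)%nat /\ cell_lo l <= x < cell_hi l.
Proof.
intros [x_ge0 x_lt].
assert (covered : forall n, x < INR n * (2 * PI / INR L) ->
          exists l, (1 <= l <= n)%nat /\ cell_lo l <= x < cell_hi l).
{ induction n as [|n IH]; intros x_lt_n; [simpl in x_lt_n; lra|].
  destruct (Rlt_le_dec x (INR n * (2 * PI / INR L))) as [x_lt'|x_ge].
  - destruct (IH x_lt') as [l [l_range x_in]]. exists l. split; [lia | exact x_in].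
  - exists (S n). unfold cell_lo, cell_hi. rewrite S_INR in *. split; [lia | lra]. }
apply covered. replace (INR L * (2 * PI / INR L)) with (2 * PI) by (field; lra). exact x_lt.
Qed.

Lemma sin_cell_lo (l : nat) : sin (cell_lo l * INR L / 2) = 0.
Proof.
apply sin_eq_0_1. exists (Z.of_nat l - 1)%Z.
rewrite minus_IZR, <- INR_IZR_INZ. unfold cell_lo. field. lra.
Qed.

Lemma sin_cell_hi (l : nat) : sin (cell_hi l * INR L / 2) = 0.
Proof.
apply sin_eq_0_1. exists (Z.of_nat l).
rewrite <- INR_IZR_INZ. unfold cell_hi. field. lra.
Qed.

(* On the open cell, q L / 2 lies strictly between (l - 1) PI and l PI. *)
Lemma sin_neq0_in_cell (l : nat) (q : R) :
  cell_lo l < q < cell_hi l -> sin (q * INR L / 2) <> 0.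
Proof.
intros [q_gt q_lt] sin0. destruct (sin_eq_0_0 _ sin0) as [k Hk].
pose proof PI_RGT_0.
assert (E1 : q * INR L / 2 - (INR l - 1) * PI = (q - cell_lo l) * (INR L / 2))
  by (unfold cell_lo; field; lra).
assert (E2 : INR l * PI - q * INR L / 2 = (cell_hi l - q) * (INR L / 2))
  by (unfold cell_hi; field; lra).
assert (0 < (q - cell_lo l) * (INR L / 2)) by (apply Rmult_lt_0_compat; lra).
assert (0 < (cell_hi l - q) * (INR L / 2)) by (apply Rmult_lt_0_compat; lra).
rewrite Hk, INR_IZR_INZ in E1, E2.
assert (k_gt : IZR (Z.of_nat l) - 1 < IZR k) by (apply (Rmult_lt_reg_r PI); lra).
assert (k_lt : IZR k < IZR (Z.of_nat l)) by (apply (Rmult_lt_reg_r PI); lra).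
rewrite <- minus_IZR in k_gt. apply lt_IZR in k_gt, k_lt. lia.
Qed.

Lemma lam_of_derive (q : R) :
  sin (q * INR L / 2) <> 0 -> derivable_pt_lim lam_of q (dlam_of q).
Proof.
intros sin_nz. apply is_derive_Reals. unfold lam_of, dlam_of, cot. auto_derive; [exact sin_nz|].
unfold Rdiv in *. set (s := sin (q * INR L * / 2)) in *. set (c := cos (q * INR L * / 2)).
assert (c2 : c ^ 2 = 1 - s ^ 2) by (unfold s, c; rewrite <- (sin2_cos2 (q * INR L * / 2)); unfold Rsqr; ring).
field_simplify; [| exact sin_nz ..]. rewrite c2. field. exact sin_nz.
Qed.

Lemma lam_of_continuous_in_cell (l : nat) (q : R) :
  cell_lo l < q < cell_hi l -> continuity_pt lam_of q.
Proof.
intros q_in. apply derivable_continuous_pt. exists (dlam_of q).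
apply lam_of_derive, (sin_neq0_in_cell l), q_in.
Qed.

Hypothesis takahashi : 8 < U * INR L.

Lemma U_pos : 0 < U.
Proof. destruct (Rlt_le_dec 0 U); [assumption|]. nra. Qed.

(* Since sin^2 <= 1, the cot term alone contributes at least U L / 8 > 1 >= - cos q. *)
Lemma dlam_of_pos (q : R) : sin (q * INR L / 2) <> 0 -> 0 < dlam_of q.
Proof.
intros sin_nz. unfold dlam_of. set (s := sin (q * INR L / 2)) in *.
pose proof (SIN_bound (q * INR L / 2)). pose proof (COS_bound q).
assert (s2_pos : 0 < s ^ 2) by (apply pow2_gt_0; exact sin_nz).
assert (s2_le1 : s ^ 2 <= 1) by (unfold s; nra).
assert (E : U * INR L / 8 / s ^ 2 - 1 = (U * INR L - 8 * s ^ 2) / (8 * s ^ 2)) by (field; lra).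
assert (0 < (U * INR L - 8 * s ^ 2) / (8 * s ^ 2)) by (apply Rdiv_lt_0_compat; nra).
lra.
Qed.

Lemma lam_of_increasing_in_cell (l : nat) (x y : R) :
  cell_lo l < x -> x < y -> y < cell_hi l -> lam_of x < lam_of y.
Proof.
intros x_gt xy y_lt.
destruct (MVT_cor2 lam_of dlam_of x y xy) as [c [E c_in]].
- intros c c_in. apply lam_of_derive, (sin_neq0_in_cell l). lra.
- assert (0 < dlam_of c) by (apply dlam_of_pos, (sin_neq0_in_cell l); lra). nra.
Qed.

Lemma lam_of_inj_in_cell (l : nat) (x y : R) :
  cell_lo l < x < cell_hi l -> cell_lo l < y < cell_hi l -> lam_of x = lam_of y -> x = y.
Proof.
intros x_in y_in E. destruct (Rtotal_order x y) as [xy|[xy|xy]]; [|exact xy|].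
- pose proof (lam_of_increasing_in_cell l x y). lra.
- pose proof (lam_of_increasing_in_cell l y x). lra.
Qed.

(* Near the left end of the cell cot (q L / 2) -> +oo, near the right end -> -oo. *)
Lemma lam_of_surj_in_cell (l : nat) (Lam : R) : (1 <= l)%nat ->
  exists q, cell_lo l < q < cell_hi l /\ lam_of q = Lam.
Proof.
intros l_ge1. pose proof PI2_1. pose proof U_pos.
destruct (cot_unbounded (4 / U * (Rabs Lam + 2))) as [t [[t_pos t_le1] cot_big]].
assert (lam_big : Rabs Lam + 2 <= U / 4 * cot t).
{ apply (Rmult_le_compat_l (U / 4)) in cot_big; [|lra].
  replace (U / 4 * (4 / U * (Rabs Lam + 2))) with (Rabs Lam + 2) in cot_big by (field; lra).
  exact cot_big. }
pose proof (Rle_abs Lam). pose proof (Rle_abs (- Lam)). rewrite Rabs_Ropp in *.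
destruct l as [|k]; [lia|].
set (q1 := cell_lo (S k) + 2 * t / INR L).
set (q2 := cell_hi (S k) - 2 * t / INR L).
assert (E1 : q1 * INR L / 2 = t + INR k * PI) by (unfold q1, cell_lo; rewrite S_INR; field; lra).
assert (E2 : q2 * INR L / 2 = (PI - t) + INR k * PI) by (unfold q2, cell_hi; rewrite S_INR; field; lra).
assert (lam_q1 : lam_of q1 - Lam < 0).
{ unfold lam_of. rewrite E1, cot_add_nat_PI. pose proof (SIN_bound q1). lra. }
assert (lam_q2 : 0 < lam_of q2 - Lam).
{ unfold lam_of. rewrite E2, cot_add_nat_PI, cot_PI_minus. pose proof (SIN_bound q2). lra. }
assert (0 < 2 * t / INR L) by (apply Rdiv_lt_0_compat; lra).
assert (4 * t / INR L < 2 * PI / INR L) by (apply Rmult_lt_compat_r; [apply Rinv_0_lt_compat|]; lra).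
assert (q1_in : cell_lo (S k) < q1) by (unfold q1; lra).
assert (q2_in : q2 < cell_hi (S k)) by (unfold q2; lra).
assert (q12 : q1 < q2) by (unfold q1, q2, cell_lo, cell_hi in *; lra).
destruct (IVT_interv (fun q => lam_of q - Lam) q1 q2) as [z [z_in z_root]]; [| assumption ..|].
- intros a a_in. apply (continuity_pt_minus lam_of (fct_cte Lam)).
  + apply (lam_of_continuous_in_cell (S k)). lra.
  + apply continuity_pt_const. now intros u v.
- exists z. split; lra.
Qed.


Lemma is_solution_iff (Lam x : R) :
  is_solution L U Lam x <-> 0 <= x < 2 * PI /\ sin (x * INR L / 2) <> 0 /\ lam_of x = Lam.
Proof. unfold is_solution, lam_of. split; intros (x_range & sin_nz & E); repeat split; auto; lra. Qed.

Lemma solution_in_cell (Lam x : R) : is_solution L U Lam x ->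
  exists l, (1 <= l <= L)%nat /\ cell_lo l < x < cell_hi l /\ lam_of x = Lam.
Proof.
intros (x_range & sin_nz & E)%is_solution_iff.
destruct (cell_cover x x_range) as [l [l_range [[x_gt|x_eq] x_lt]]].
- exists l. auto.
- destruct sin_nz. rewrite <- x_eq. apply sin_cell_lo.
Qed.

Lemma in_cell_is_solution (l : nat) (Lam x : R) : (1 <= l <= L)%nat ->
  cell_lo l < x < cell_hi l -> lam_of x = Lam -> is_solution L U Lam x.
Proof.
intros l_range x_in E. apply is_solution_iff. pose proof (cell_in_range l l_range).
split; [lra|]. split; [apply (sin_neq0_in_cell l x x_in) | exact E].
Qed.

Definition branch (l : nat) (Lam : R) : R :=
  epsilon (inhabits 0) (fun q => cell_lo l < q < cell_hi l /\ lam_of q = Lam).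

Section Branch.

Variable l : nat.
Hypothesis l_ge1 : (1 <= l)%nat.

Lemma branch_spec (Lam : R) :
  cell_lo l < branch l Lam < cell_hi l /\ lam_of (branch l Lam) = Lam.
Proof. unfold branch. apply epsilon_spec, lam_of_surj_in_cell, l_ge1. Qed.

Lemma branch_unique (Lam q : R) :
  cell_lo l < q < cell_hi l -> lam_of q = Lam -> q = branch l Lam.
Proof.
intros q_in E. destruct (branch_spec Lam) as [b_in b_E].
apply (lam_of_inj_in_cell l); congruence.
Qed.

Lemma branch_le (Lam q : R) :
  cell_lo l < q < cell_hi l -> Lam <= lam_of q -> branch l Lam <= q.
Proof.
intros q_in le. destruct (branch_spec Lam) as [b_in b_E].
destruct (Rle_lt_dec (branch l Lam) q) as [|lt]; [assumption|].
pose proof (lam_of_increasing_in_cell l q (branch l Lam)). lra.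
Qed.

Lemma branch_ge (Lam q : R) :
  cell_lo l < q < cell_hi l -> lam_of q <= Lam -> q <= branch l Lam.
Proof.
intros q_in le. destruct (branch_spec Lam) as [b_in b_E].
destruct (Rle_lt_dec q (branch l Lam)) as [|lt]; [assumption|].
pose proof (lam_of_increasing_in_cell l (branch l Lam) q). lra.
Qed.

Lemma branch_le_branch (Lam1 Lam2 : R) : Lam1 <= Lam2 -> branch l Lam1 <= branch l Lam2.
Proof.
intros le. destruct (branch_spec Lam1) as [b_in b_E].
apply branch_ge; [exact b_in | lra].
Qed.

Lemma branch_continuous (Lam : R) : continuity_pt (branch l) Lam.
Proof.
destruct (branch_spec Lam) as [[b_gt b_lt] b_E].
set (b := branch l Lam) in *.
set (eps := Rmin ((b - cell_lo l) / 2) ((cell_hi l - b) / 2)).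
assert (eps_pos : 0 < eps) by (apply Rmin_glb_lt; lra).
assert (eps_le1 : eps <= (b - cell_lo l) / 2) by apply Rmin_l.
assert (eps_le2 : eps <= (cell_hi l - b) / 2) by apply Rmin_r.
apply (continuity_pt_recip_interv lam_of (branch l) (b - eps) (b + eps)); [lra | ..].
- intros x y x_ge xy y_le. apply (lam_of_increasing_in_cell l); lra.
- intros x _ _. apply branch_spec.
- intros x x_ge x_le. split; [apply branch_ge | apply branch_le]; lra.
- intros a a_in. apply (lam_of_continuous_in_cell l). lra.
- rewrite <- b_E. split; apply (lam_of_increasing_in_cell l); lra.
Qed.

Lemma branch_derive (Lam : R) : exists d, derivable_pt_lim (branch l) Lam d /\ 0 < d.
Proof.
assert (mono : branch l (Lam - 1) <= branch l Lam <= branch l (Lam + 1))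
  by (split; apply branch_le_branch; lra).
assert (derivable : forall a, branch l (Lam - 1) <= a <= branch l (Lam + 1) ->
                      derivable_pt lam_of a).
{ intros a a_in. exists (dlam_of a). apply lam_of_derive, (sin_neq0_in_cell l).
  destruct (branch_spec (Lam - 1)), (branch_spec (Lam + 1)). lra. }
assert (sin_nz : sin (branch l Lam * INR L / 2) <> 0)
  by apply (sin_neq0_in_cell l), branch_spec.
assert (deriv_eq : derive_pt lam_of (branch l Lam) (derivable _ mono) = dlam_of (branch l Lam))
  by apply derive_pt_eq_0, lam_of_derive, sin_nz.
pose proof (dlam_of_pos _ sin_nz).
exists (1 / derive_pt lam_of (branch l Lam) (derivable _ mono)). split.
- apply derivable_pt_lim_recip_interv; [apply branch_continuous | lra | lra | | lra].
  intros x _. apply branch_spec.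
- rewrite deriv_eq. apply Rdiv_lt_0_compat; lra.
Qed.

Lemma branch_lim_m_infty : is_lim (branch l) m_infty (cell_lo l).
Proof.
apply is_lim_m_infty_of_ge; [intros Lam; apply Rlt_le, branch_spec|].
intros z z_gt. destruct (Rlt_le_dec z (cell_hi l)) as [z_lt|z_ge].
- exists (lam_of z). intros Lam Lam_lt. apply branch_le; lra.
- exists 0. intros Lam _. apply Rlt_le. destruct (branch_spec Lam). lra.
Qed.

Lemma branch_lim_p_infty : is_lim (branch l) p_infty (cell_hi l).
Proof.
apply is_lim_p_infty_of_le; [intros Lam; apply Rlt_le, branch_spec|].
intros z z_lt. destruct (Rlt_le_dec (cell_lo l) z) as [z_gt|z_le].
- exists (lam_of z). intros Lam Lam_gt. apply branch_ge; lra.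
- exists 0. intros Lam _. apply Rlt_le. destruct (branch_spec Lam). lra.
Qed.

End Branch.

(* A continuous branch never takes the value of a cell endpoint, where the
   cotangent is undefined, so it stays in the cell of p 0. *)
Lemma continuous_branch_eq (p : R -> R) : is_branch L U p -> continuity p ->
  exists l, (1 <= l <= L)%nat /\ forall Lam, p Lam = branch l Lam.
Proof.
intros p_branch p_cont.
destruct (solution_in_cell 0 (p 0) (p_branch 0)) as [l (l_range & [p0_gt p0_lt] & _)].
assert (avoid : forall c, sin (c * INR L / 2) = 0 -> forall Lam, p Lam <> c).
{ intros c sin0 Lam E. destruct (p_branch Lam) as (_ & sin_nz & _). rewrite E in sin_nz. auto. }
exists l. split; [exact l_range|]. intros Lam.
destruct (proj1 (is_solution_iff Lam (p Lam)) (p_branch Lam)) as (_ & _ & E).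
apply (branch_unique l); [lia | | exact E]. split.
- apply Ropp_lt_cancel. apply (continuous_avoid_side (fun x => - p x) (- cell_lo l) 0).
  + now apply continuity_opp.
  + intros z Ez. apply (avoid (cell_lo l) (sin_cell_lo l) z). lra.
  + lra.
- apply (continuous_avoid_side p (cell_hi l) 0); [exact p_cont | | exact p0_lt].
  apply avoid, sin_cell_hi.
Qed.

End Cells.

Theorem mainTheorem1 (L : nat) (U : R)
  (hL : (0 < L)%nat) (hU : 0 < U) (hT : 8 / U < INR L) :
  exists q : nat -> R -> R,
    (* each q l (1 <= l <= L) is a branch of solutions *)
    (forall l, (1 <= l <= L)%nat -> is_branch L U (q l)) /\
    (* for every Lam these are all the solutions, and they are pairwise distinct *)
    (forall Lam x, is_solution L U Lam x ->
       exists l, (1 <= l <= L)%nat /\ x = q l Lam) /\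
    (forall Lam l l', (1 <= l <= L)%nat -> (1 <= l' <= L)%nat -> l <> l' ->
       q l Lam <> q l' Lam) /\
    (* every continuous branch is one of them *)
    (forall p : R -> R, is_branch L U p -> continuity p ->
       exists l, (1 <= l <= L)%nat /\ forall Lam, p Lam = q l Lam) /\
    (forall l, (1 <= l <= L)%nat ->
       (* (i) *)
       (forall Lam, (INR l - 1) * (2 * PI / INR L) <= q l Lam <= INR l * (2 * PI / INR L)) /\
       (* (ii) *)
       (forall Lam, exists d, derivable_pt_lim (q l) Lam d /\ 0 < d) /\
       (* (iii) *)
       is_lim (q l) m_infty (Finite ((INR l - 1) * (2 * PI / INR L))) /\
       is_lim (q l) p_infty (Finite (INR l * (2 * PI / INR L)))).
Proof.
assert (L_pos : 0 < INR L) by (apply lt_0_INR; exact hL).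
assert (takahashi : 8 < U * INR L).
{ apply (Rmult_lt_compat_l U) in hT; [|exact hU].
  replace (U * (8 / U)) with 8 in hT by (field; lra). exact hT. }
pose proof (branch_spec L U L_pos takahashi) as spec.
exists (branch L U). split; [|split; [|split; [|split]]].
- intros l l_range Lam. destruct (spec l ltac:(lia) Lam) as [b_in b_E].
  exact (in_cell_is_solution L U L_pos l Lam _ l_range b_in b_E).
- intros Lam x x_sol.
  destruct (solution_in_cell L U L_pos Lam x x_sol) as [l (l_range & x_in & E)].
  exists l. split; [exact l_range|]. apply branch_unique; auto; lia.
- intros Lam l l' l_range l'_range ll' E.
  destruct (spec l ltac:(lia) Lam) as [b_in _], (spec l' ltac:(lia) Lam) as [b'_in _].
  destruct (Nat.lt_total l l') as [lt|[eq|gt]]; [| exact (ll' eq) |].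
  + pose proof (cell_hi_le_lo L L_pos l l' lt). lra.
  + pose proof (cell_hi_le_lo L L_pos l' l gt). lra.
- apply continuous_branch_eq; assumption.
- intros l l_range. split; [|split; [|split]].
  + intros Lam. destruct (spec l ltac:(lia) Lam) as [b_in _]. unfold cell_lo, cell_hi in b_in. lra.
  + apply branch_derive; auto; lia.
  + apply branch_lim_m_infty; auto; lia.
  + apply branch_lim_p_infty; auto; lia.
Qed.
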